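(* Let $\mathbf W$, $\mathbf L_{rw}$ be as in the context, let $\mu>0$, and let $\mathbf H\in\{0,1\}^{K\times N}$ with $1\le K<N$ be a sampling matrix (each row has exactly one entry $1$, in distinct columns). Then $\mathbf H^\top\mathbf H+\mu\,\mathbf L_{rw}^\top\mathbf L_{rw}$ is positive definite; consequently, for every $\mathbf y\in\mathbb R^K$ the problem $\min_{\mathbf x\in\mathbb R^N}\|\mathbf H\mathbf x-\mathbf y\|_2^2+\mu\,\mathbf x^\top\mathbf L_{rw}^\top\mathbf L_{rw}\mathbf x$ has the unique minimizer $\mathbf x^*=(\mathbf H^\top\mathbf H+\mu\mathbf L_{rw}^\top\mathbf L_{rw})^{-1}\mathbf H^\top\mathbf y$.
   Context: A directed graph on $N$ nodes is given by an adjacency matrix $\mathbf W\in\mathbb R^{N\times N}$ with $W_{i,j}\ge 0$ ($W_{i,j}>0$ iff there is a directed edge $(i,j)$) and $W_{i,i}=0$ for all $i$. The out-degree matrix is the diagonal matrix $\mathbf D$ with $D_{i,i}=\sum_j W_{i,j}$; it is assumed that $D_{i,i}>0$ for all $i$. The normalized adjacency matrix is $\bar{\mathbf W}=\mathbf D^{-1}\mathbf W$ and the random-walk Laplacian is $\mathbf L_{rw}=\mathbf I-\bar{\mathbf W}$. It is assumed that there exists a node $v$ such that from every other node there is a directed path to $v$. *)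

From mathcomp Require Import all_boot all_order all_algebra.
Set Implicit Arguments. Unset Strict Implicit. Unset Printing Implicit Defensive.
Import Order.TTheory GRing.Theory Num.Theory.
Local Open Scope ring_scope.

Definition edge (R : realFieldType) (N : nat) (W : 'M[R]_N) : rel 'I_N :=
  fun i j => 0 < W i j.

Definition degmx (R : realFieldType) (N : nat) (W : 'M[R]_N) : 'M[R]_N :=
  diag_mx (\row_i \sum_j W i j).

Definition normadj (R : realFieldType) (N : nat) (W : 'M[R]_N) : 'M[R]_N :=
  invmx (degmx W) *m W.

Definition Lrw (R : realFieldType) (N : nat) (W : 'M[R]_N) : 'M[R]_N :=
  1%:M - normadj W.

Definition sampling_matrix (R : realFieldType) (K N : nat) (H : 'M[R]_(K, N)) : Prop :=
  (forall k j, H k j = 0 \/ H k j = 1) /\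
  (forall k, exists j, H k j = 1 /\ forall j', H k j' = 1 -> j' = j) /\
  (forall k k' j, H k j = 1 -> H k' j = 1 -> k = k').

Definition posdef (R : realFieldType) (N : nat) (A : 'M[R]_N) : Prop :=
  A^T = A /\ forall x : 'cV[R]_N, x != 0 -> 0 < (x^T *m A *m x) 0 0.

Definition sqnorm (R : realFieldType) (n : nat) (v : 'cV[R]_n) : R :=
  \sum_i (v i 0) ^+ 2.

Definition objective (R : realFieldType) (K N : nat) (H : 'M[R]_(K, N))
  (L : 'M[R]_N) (mu : R) (y : 'cV[R]_K) (x : 'cV[R]_N) : R :=
  sqnorm (H *m x - y) + mu * (x^T *m L^T *m L *m x) 0 0.

From mathcomp Require Import all_boot all_order all_algebra.
From mathcomp Require Import ring.
Set Implicit Arguments.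
Unset Strict Implicit.
Unset Printing Implicit Defensive.
Import Order.TTheory GRing.Theory Num.Theory.
Local Open Scope ring_scope.

(* Since [x^T M x = |H x|^2 + mu |L_rw x|^2], positive definiteness of [M]
   amounts to [ker H /\ ker L_rw = 0].  A vector with [L_rw x = 0] satisfies
   the mean-value property [x_i = sum_j Wbar_ij x_j], so by a maximum
   principle a maximum of [x] propagates along edges; as every node reaches
   [v], both [x] and [-x] are maximal at [v], i.e. [x] is constant, and a
   nonempty sampling reads off that constant.  Finally, expanding the
   objective around [x* = M^-1 H^T y] gives [J (x* + d) = J x* + d^T M d]. *)

Lemma connect_invariant (T : finType) (e : rel T) (P : pred T) x y :
  (forall a b, e a b -> P a -> P b) -> connect e x y -> P x -> P y.
Proof.
move=> eP /connectP [p e_p ->]; elim: p x e_p => //= a p IHp x /andP [e_xa e_p].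
by move=> /(eP _ _ e_xa); exact: IHp.
Qed.

Section Harmonic.

Variables (R : realFieldType) (N : nat) (W : 'M[R]_N).
Hypothesis W_ge0 : forall i j, 0 <= W i j.
Hypothesis deg_gt0 : forall i, 0 < \sum_j W i j.

Lemma degmx_unit : degmx W \in unitmx.
Proof.
rewrite unitmxE /degmx det_diag unitfE; apply/prodf_neq0 => i _.
by rewrite mxE gt_eqF.
Qed.

Lemma Lrw_ker_mean (x : 'cV[R]_N) :
  Lrw W *m x = 0 -> forall i, \sum_j W i j * (x i 0 - x j 0) = 0.
Proof.
move=> Lx i.
have : degmx W *m (Lrw W *m x) = 0 by rewrite Lx mulmx0.
rewrite /Lrw /normadj mulmxA mulmxBr mulmx1 mulmxA mulmxV ?degmx_unit //.
rewrite mul1mx mulmxBl /degmx mul_diag_mx => /matrixP /(_ i 0).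
rewrite !mxE => mean_i.
by under eq_bigr => j _ do rewrite mulrBr; rewrite sumrB -mulr_suml; exact: mean_i.
Qed.

Lemma Lrw_ker_max_edge (x : 'cV[R]_N) k j :
  Lrw W *m x = 0 -> (forall i, x i 0 <= x k 0) -> edge W k j -> x j 0 = x k 0.
Proof.
move=> Lx xk_max W_kj.
have terms_ge0 j' : true -> 0 <= W k j' * (x k 0 - x j' 0).
  by move=> _; rewrite mulr_ge0 // subr_ge0.
have /eqP := psumr_eq0P terms_ge0 (Lrw_ker_mean Lx k) (i := j) isT.
by rewrite mulf_eq0 gt_eqF //= subr_eq0 => /eqP <-.
Qed.

Lemma Lrw_ker_const (x : 'cV[R]_N) (v : 'I_N) :
  (forall i, i != v -> connect (edge W) i v) -> Lrw W *m x = 0 ->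
  forall i, x i 0 = x v 0.
Proof.
move=> to_v Lx.
have reach_v i : connect (edge W) i v by have [->|/to_v] := eqVneq i v.
have le_v (z : 'cV[R]_N) : Lrw W *m z = 0 -> forall i, z i 0 <= z v 0.
  move=> Lz; have [k _ z_max] := @arg_maxP _ _ _ v predT (fun i => z i 0) isT.
  have max_k : z v 0 == z k 0.
    apply: (@connect_invariant _ _ (fun i => z i 0 == z k 0) k v) (reach_v k) _ => //.
    move=> a b W_ab /eqP za; apply/eqP; rewrite -za.
    by apply: Lrw_ker_max_edge W_ab => // i; rewrite za; exact: z_max.
  by move=> i; rewrite (eqP max_k); exact: z_max.
have Lnx : Lrw W *m (- x) = 0 by rewrite mulmxN Lx oppr0.
move=> i; apply/eqP; rewrite eq_le le_v //=.
by have := le_v _ Lnx i; rewrite !mxE lerN2.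
Qed.

End Harmonic.

Lemma sampling_mulmx_entry (R : realFieldType) (K N n : nat) (H : 'M[R]_(K, N))
    (x : 'M[R]_(N, n)) k l :
  sampling_matrix H -> exists j, (H *m x) k l = x j l.
Proof.
move=> [H01 [row1 _]]; have [j [Hkj j_uniq]] := row1 k; exists j.
rewrite mxE (bigD1 j) //= Hkj mul1r big1 ?addr0 // => j' j'j.
have [->|/j_uniq j'E] := H01 k j'; first by rewrite mul0r.
by rewrite j'E eqxx in j'j.
Qed.

Lemma bilinear_formC (R : comPzRingType) m n (a : 'cV[R]_m) (B : 'M[R]_(m, n))
    (c : 'cV[R]_n) :
  (a^T *m B *m c) 0 0 = (c^T *m B^T *m a) 0 0.
Proof.
by rewrite -[LHS]trace_mx11 -mxtrace_tr !trmx_mul trmxK mulmxA trace_mx11.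
Qed.

Section QuadraticForm.

Variables (R : realFieldType) (n : nat).

Lemma sqnormE (v : 'cV[R]_n) : sqnorm v = (v^T *m v) 0 0.
Proof. by rewrite mxE; apply: eq_bigr => i _; rewrite !mxE expr2. Qed.

Lemma sqnorm_ge0 (v : 'cV[R]_n) : 0 <= sqnorm v.
Proof. by apply: sumr_ge0 => i _; exact: sqr_ge0. Qed.

Lemma sqnorm_eq0 (v : 'cV[R]_n) : (sqnorm v == 0) = (v == 0).
Proof.
apply/idP/eqP => [/eqP v0|->]; last by rewrite /sqnorm big1 // => i _; rewrite mxE expr0n.
apply/matrixP => i j; rewrite ord1 mxE.
have /eqP := psumr_eq0P (fun i _ => sqr_ge0 (v i 0)) v0 (i := i) isT.
by rewrite sqrf_eq0 => /eqP.
Qed.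

Lemma posdef_unitmx (A : 'M[R]_n) : posdef A -> A \in unitmx.
Proof.
move=> [_ A_pos]; rewrite unitmxE unitfE; apply/negP => /det0P [w w_neq0 wA0].
have wT_neq0 : w^T != 0 by rewrite -(inj_eq trmx_inj) trmxK trmx0.
by have := A_pos _ wT_neq0; rewrite trmxK wA0 mul0mx mxE ltxx.
Qed.

Lemma posdef_form_ge0 (A : 'M[R]_n) (z : 'cV[R]_n) :
  posdef A -> 0 <= (z^T *m A *m z) 0 0.
Proof.
move=> [_ A_pos]; have [->|/A_pos/ltW //] := eqVneq z 0.
by rewrite mulmx0 mxE.
Qed.

End QuadraticForm.

Section Objective.

Variables (R : realFieldType) (K N : nat) (H : 'M[R]_(K, N)) (L : 'M[R]_N) (mu : R).

Let M := H^T *m H + mu *: (L^T *m L).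

Lemma normal_form (x : 'cV[R]_N) :
  (x^T *m M *m x) 0 0 = sqnorm (H *m x) + mu * sqnorm (L *m x).
Proof.
rewrite !sqnormE /M mulmxDr mulmxDl -scalemxAr -scalemxAl !trmx_mul !mulmxA.
by rewrite [LHS]mxE [X in _ + X = _]mxE.
Qed.

Lemma normal_posdef :
  0 < mu -> (forall x : 'cV[R]_N, H *m x = 0 -> L *m x = 0 -> x = 0) -> posdef M.
Proof.
move=> mu_gt0 ker0; split.
  by rewrite /M linearD linearZ /= !trmx_mul !trmxK.
move=> x x_neq0; rewrite normal_form.
have Hx_ge0 := sqnorm_ge0 (H *m x).
have muLx_ge0 := mulr_ge0 (ltW mu_gt0) (sqnorm_ge0 (L *m x)).
rewrite lt_neqAle addr_ge0 // andbT eq_sym paddr_eq0 // mulf_eq0 (gt_eqF mu_gt0) /=.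
rewrite !sqnorm_eq0; apply: contra x_neq0 => /andP [/eqP Hx /eqP Lx].
by rewrite (ker0 _ Hx Lx).
Qed.

Lemma objective_shift (y : 'cV[R]_K) (u d : 'cV[R]_N) :
  objective H L mu y (u + d) = objective H L mu y u +
    2 * (d^T *m (M *m u - H^T *m y)) 0 0 + (d^T *m M *m d) 0 0.
Proof.
have uHd := bilinear_formC u (H^T *m H) d.
have uLd := bilinear_formC u (L^T *m L) d.
have yHd := bilinear_formC y H d.
rewrite /objective !sqnormE /M -!trace_mx11 !trmx_mul !trmxK !mulmxA in uHd uLd yHd *.
rewrite !(raddfB, raddfD, raddfN, mulmxDl, mulmxBl, mulNmx) /=.
rewrite !(mulmxDl, mulmxBl, trmx_mul) -!(scalemxAl, scalemxAr) !mulmxA.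
rewrite !(raddfB, raddfD, mxtraceZ) /= !mulNmx !raddfN /= uHd uLd yHd.
ring.
Qed.

Lemma objective_minimizer (y : 'cV[R]_K) : posdef M ->
  let xs := invmx M *m (H^T *m y) in
  (forall x, objective H L mu y xs <= objective H L mu y x) /\
  (forall x, (forall z, objective H L mu y x <= objective H L mu y z) -> x = xs).
Proof.
move=> M_pd xs.
have normal_eq : M *m xs = H^T *m y by rewrite mulKVmx ?posdef_unitmx.
have excess x : objective H L mu y x =
    objective H L mu y xs + ((x - xs)^T *m M *m (x - xs)) 0 0.
  by rewrite -{1}(subrK xs x) addrC objective_shift normal_eq subrr mulmx0 mxE mulr0 addr0.
split=> [x | x x_min]; first by rewrite (excess x) lerDl posdef_form_ge0.
have := x_min xs; rewrite (excess x) gerDl => form_le0.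
apply/eqP; rewrite -subr_eq0; apply/negPn/negP => /M_pd.2.
by rewrite ltNge form_le0.
Qed.

End Objective.

Theorem mainTheorem3 (R : realFieldType) (N K : nat) (W : 'M[R]_N)
  (H : 'M[R]_(K, N)) (mu : R) :
  (forall i j, 0 <= W i j) ->
  (forall i, W i i = 0) ->
  (forall i, 0 < \sum_j W i j) ->
  (exists v : 'I_N, forall i, i != v -> connect (edge W) i v) ->
  0 < mu ->
  (1 <= K)%N -> (K < N)%N ->
  sampling_matrix H ->
  let M := H^T *m H + mu *: ((Lrw W)^T *m Lrw W) in
  posdef M /\ M \in unitmx /\
  forall y : 'cV[R]_K,
    let xs := invmx M *m (H^T *m y) in
    (forall x, objective H (Lrw W) mu y xs <= objective H (Lrw W) mu y x) /\
    (forall x, (forall z, objective H (Lrw W) mu y x <= objective H (Lrw W) mu y z) ->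
               x = xs).
Proof.
move=> W_ge0 _ deg_gt0 [v to_v] mu_gt0 K_gt0 _ H_sampling M.
have M_pd : posdef M.
  apply: normal_posdef => // x Hx Lx.
  have x_const := Lrw_ker_const W_ge0 deg_gt0 to_v Lx.
  have [j Hx_j] := sampling_mulmx_entry x (Ordinal K_gt0) 0 H_sampling.
  by apply/matrixP => i l; rewrite ord1 x_const -(x_const j) -Hx_j Hx !mxE.
split=> //; split; first exact: posdef_unitmx.
by move=> y; exact: objective_minimizer.
Qed.
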